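(* Regard the grid parabola $P_t$ and the reference parabola $\Pi_t\colon y=x^2/(2H_t)$ as graphs of functions $P_t(x)$, $\Pi_t(x)$ on $\mathbb R$. Then $\sup_{x\in\mathbb R}|P_t(x)-\Pi_t(x)|=O(t^2\log t)$ as $t\to\infty$.
   Context: Fix an integer $t\ge1$. Let $S_t$ be the set of rational numbers $s$ which, written in lowest terms as $s=a/b$ with $a\in\mathbb Z$ and $b$ a positive integer, satisfy $b\le t$. For $s=a/b\in S_t$ let $v_s=\lfloor t/b\rfloor\,(b,a)$, and $V_t=\{v_s:s\in S_t\}$. The grid parabola $P_t$ is the infinite convex polygonal chain obtained by concatenating the vectors of $V_t$ in order of increasing slope, positioned so that the edge given by $(t,0)$ goes from $(-t/2,0)$ to $(t/2,0)$. $H_t=\sum_{1\le y\le x\le t,\ \gcd(x,y)=1}\lfloor t/x\rfloor\,x$. *)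

From HB Require Import structures.
From mathcomp Require Import all_boot all_order all_algebra.
From mathcomp Require Import reals exp.
Set Implicit Arguments. Unset Strict Implicit. Unset Printing Implicit Defensive.
Import Order.TTheory GRing.Theory Num.Theory.

(* Membership of the rational s = a/b (a : int with |a| = n) in S_t:
   b positive, b <= t, and a/b in lowest terms (gcd(|a|,b) = 1). *)
Definition inSt (t n b : nat) : bool := (0 < b <= t)%N && coprime n b.

(* For s = n/b > 0 in S_t: sum of the x-components (resp. y-components)
   of the vectors v_{s'} = floor(t/b') (b', n') over all s' = n'/b' in S_t
   with 0 < s' < s.  (Any such s' has n' < n t, so the range is complete.) *)
Definition Sx (t n b : nat) : nat :=
  \sum_(1 <= b' < t.+1)
     \sum_(1 <= n' < (n * t).+1 | inSt t n' b' && (n' * b < n * b')%N)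
        ((t %/ b') * b')%N.

Definition Sy (t n b : nat) : nat :=
  \sum_(1 <= b' < t.+1)
     \sum_(1 <= n' < (n * t).+1 | inSt t n' b' && (n' * b < n * b')%N)
        ((t %/ b') * n')%N.

Local Open Scope ring_scope.

(* (x,y) lies on the grid parabola P_t.
   - slope 0 (s = 0/1): the edge v_0 = (t,0) from (-t/2,0) to (t/2,0);
   - slope s = n/b > 0: the edge v_s starts at
       (t/2 + Sx t n b, Sy t n b)  and has vector floor(t/b) (b, n);
   - slope s = -n/b < 0: by the symmetry s -> -s of S_t, the edge v_s is the
     mirror image (x -> -x) of the edge v_{n/b}.
   [neg] selects the negative-slope mirror edge. *)
Definition on_grid_parabola {R : realType} (t : nat) (x y : R) : Prop :=
  exists (n b : nat) (neg : bool) (l : R),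
    [/\ inSt t n b, 0 <= l, l <= 1 &
      if n == 0%N then x = - (t%:R / 2) + l * t%:R /\ y = 0
      else
        let X := t%:R / 2 + (Sx t n b)%:R + l * ((t %/ b) * b)%N%:R in
        let Y := (Sy t n b)%:R + l * ((t %/ b) * n)%N%:R in
        (x = (if neg then - X else X)) /\ y = Y].

Definition Ht (t : nat) : nat :=
  \sum_(1 <= x < t.+1) \sum_(1 <= y < x.+1 | coprime x y) ((t %/ x) * x)%N.

(* On the edge of slope s = n/b the grid parabola starts at (t/2 + Sx, Sy), where,
   grouping the earlier edges by their denominator beta <= t, Sx and Sy are sums of
   floor(t/beta) beta #{a <= m : (a, beta) = 1} and floor(t/beta) sum{a <= m : (a, beta) = 1} a,
   m being the largest a with a/beta < s.  Inclusion-exclusion over the primes of beta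
   counts these a as m phi(beta)/beta up to 2^omega(beta), and summation by parts gives
   their sum as m^2 phi(beta)/(2 beta) up to O(beta 2^omega(beta)).  Hence Sx = s H_t + O(K)
   and Sy = s Sx - s^2 H_t/2 + t s/2 + O(K), with K = sum_beta floor(t/beta) beta
   (2^omega(beta) + 1), and completing the square in s gives y - x^2/(2 H_t) = O(K + K^2/H_t).
   Finally K = O(t^2 log t), because 2^omega(beta) is at most the number of divisors of
   beta, while H_t >> t^3 / log t, because phi(b)/b >= 1/(1 + omega(b)) and 2^omega(b) <= t. *)

From HB Require Import structures.
From mathcomp Require Import all_boot all_order all_algebra.
From mathcomp Require Import reals exp.
From mathcomp Require Import zify ring lra.
Set Implicit Arguments. Unset Strict Implicit. Unset Printing Implicit Defensive.
Import Order.TTheory GRing.Theory Num.Theory.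

Definition sieve_count (P : seq nat) (N : nat) : nat :=
  \sum_(1 <= a < N.+1) (all (fun p => ~~ (p %| a)) P : nat).

Lemma sieve_count0 P : sieve_count P 0 = 0.
Proof. by rewrite /sieve_count big_geq. Qed.

Lemma sieve_countS P N :
  sieve_count P N.+1 = sieve_count P N + all (fun p => ~~ (p %| N.+1)) P.
Proof. by rewrite /sieve_count big_nat_recr. Qed.

Lemma sieve_count_cons p P N : prime p -> p \notin P -> all prime P ->
  sieve_count (p :: P) N + sieve_count P (N %/ p) = sieve_count P N.
Proof.
move=> pp pP aP; have p0 := prime_gt0 pp.
have not_dvd_pM c : all (fun q => ~~ (q %| p * c)) P = all (fun q => ~~ (q %| c)) P.
  apply: eq_in_all => q qP; have qp : prime q by move/allP: aP => /(_ q qP).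
  by rewrite Euclid_dvdM // dvdn_prime2 //; case: eqP => // eqqp; rewrite -eqqp qP in pP.
elim: N => [|N IH]; first by rewrite div0n !sieve_count0.
rewrite !sieve_countS divnS //.
case: (boolP (p %| N.+1)) => [/dvdnP [c Hc]|ndv] /=; last by rewrite add0n; lia.
rewrite add1n sieve_countS -IH.
have -> : (N %/ p).+1 = c.
  by have := divnS N p0; rewrite Hc dvdn_mull // add1n => <-; rewrite mulnK.
rewrite Hc mulnC dvdn_mulr //= not_dvd_pM; lia.
Qed.

Lemma prime_dvd_prodE p P : prime p -> all prime P ->
  (p %| \prod_(q <- P) q) = (p \in P).
Proof.
move=> pp; elim: P => [|q P IH] /=; first by rewrite big_nil Euclid_dvd1.
by case/andP=> qp aP; rewrite big_cons Euclid_dvdM // dvdn_prime2 // IH // in_cons.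
Qed.

Lemma prod_primes_dvd b : 0 < b -> \prod_(p <- primes b) p %| b.
Proof.
move=> b0; rewrite [X in _ %| X](prod_prime_decomp b0) prime_decompE big_map /=.
rewrite big_seq [X in _ %| X]big_seq.
apply: (big_ind2 (fun x y => x %| y)) => [//|x1 x2 y1 y2|p]; first exact: dvdn_mul.
by rewrite -logn_gt0 => lp; rewrite dvdn_exp.
Qed.

Lemma all_prime_primes b : all prime (primes b).
Proof. by apply/allP => p; rewrite mem_primes => /and3P[]. Qed.

Definition coprime_count (b k : nat) : nat := \sum_(1 <= a < k.+1) (coprime a b : nat).
Definition coprime_sum (b k : nat) : nat := \sum_(1 <= a < k.+1) coprime a b * a.

Lemma coprime_countS b k : coprime_count b k.+1 = coprime_count b k + coprime k.+1 b.
Proof. by rewrite /coprime_count big_nat_recr. Qed.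

Lemma coprime_sumS b k : coprime_sum b k.+1 = coprime_sum b k + coprime k.+1 b * k.+1.
Proof. by rewrite /coprime_sum big_nat_recr. Qed.

Lemma coprime_count_sieve b k : 0 < b -> coprime_count b k = sieve_count (primes b) k.
Proof.
move=> b0; apply: eq_big_nat => a /andP[a0 _]; congr nat_of_bool.
rewrite coprime_has_primes // -all_predC; apply: eq_in_all => p.
by rewrite mem_primes => /and3P[pp _ _] /=; rewrite mem_primes pp a0.
Qed.

Lemma coprime_count_periodic b k :
  coprime_count b (k + b) = coprime_count b k + coprime_count b b.
Proof.
rewrite [RHS]addnC /coprime_count (@big_cat_nat _ _ _ b.+1) ?ltnS ?leq_addl //=.
congr addn; rewrite -{1}(add1n b) big_addn -addSn addnK.
by apply: eq_bigr => i _; rewrite /coprime gcdnC gcdnDr gcdnC.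
Qed.

(* The reflection a -> b - a of [1, b - 1] preserves coprimality with b. *)
Lemma coprime_sum_self b : 0 < b -> 2 * coprime_sum b b = b * coprime_count b b + (b == 1).
Proof.
move=> b0; case: (eqVneq b 1) => [->|bn1].
  by rewrite /coprime_sum /coprime_count !big_nat1.
have cbb : coprime b b = false by rewrite /coprime gcdnn; apply/negbTE.
rewrite /coprime_sum /coprime_count !big_nat_recr //= cbb mul0n !addn0.
rewrite mul2n -addnn {2}big_nat_rev /= -big_split big_distrr /=.
apply: eq_big_nat => i /andP[i1 ib]; rewrite add1n subSS.
have -> : coprime (b - i) b = coprime i b.
  have e : b = b - i + i by rewrite subnK // ltnW.
  have h1 : gcdn (b - i) b = gcdn (b - i) i by rewrite {2}e gcdnDl.
  have h2 : gcdn i b = gcdn i (b - i) by rewrite {1}e gcdnDr.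
  by rewrite /coprime h1 h2 gcdnC.
by case: (coprime i b) => /=; lia.
Qed.

Lemma coprime_sum_abel b m :
  coprime_sum b m + \sum_(0 <= k < m) coprime_count b k = m * coprime_count b m.
Proof.
elim: m => [|m IH]; first by rewrite /coprime_sum !big_geq.
rewrite coprime_sumS coprime_countS big_nat_recr //=.
by move: IH; case: (coprime m.+1 b) => /=; lia.
Qed.


Lemma sum_nat_truncate (f : nat -> nat) (P : pred nat) N m : m <= N ->
  \sum_(1 <= a < N.+1 | P a && (a <= m)) f a = \sum_(1 <= a < m.+1 | P a) f a.
Proof.
move=> mN; rewrite (@big_cat_nat _ _ _ m.+1) //=.
rewrite [X in _ + X]big1_seq ?addn0; last first.
  by move=> i /andP[/andP[_ im]]; rewrite mem_index_iota; lia.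
rewrite big_nat_cond [RHS]big_nat_cond; apply: eq_bigl => i.
case: (P i); rewrite ?andbF ?andbT //=.
by case: (leqP i m) => im; rewrite ?andbT ?andbF //=; lia.
Qed.

Definition edge_width (t beta : nat) : nat := t %/ beta * beta.

Definition num_below (n b beta : nat) : nat := (n * beta).-1 %/ b.

Lemma num_belowP n b beta a : 0 < b -> 0 < n * beta ->
  (a * b < n * beta) = (a <= num_below n b beta).
Proof. by move=> b0 nb0; rewrite /num_below leq_divRL //; lia. Qed.

Lemma num_below_le n b beta t : 0 < b -> beta <= t -> num_below n b beta <= n * t.
Proof.
move=> b0 bt; apply: leq_trans (leq_div _ _) _.
by apply: leq_trans (leq_pred _) _; apply: leq_mul.
Qed.

Lemma Sx_sumE t n b : 0 < b -> 0 < n ->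
  Sx t n b = \sum_(1 <= beta < t.+1)
    edge_width t beta * coprime_count beta (num_below n b beta).
Proof.
move=> b0 n0; apply: eq_big_nat => beta /andP[be0 bet]; rewrite ltnS in bet.
rewrite (eq_bigl (fun a => coprime a beta && (a <= num_below n b beta))); last first.
  by move=> a; rewrite /inSt be0 bet num_belowP ?muln_gt0 ?n0.
rewrite sum_nat_truncate ?num_below_le // big_mkcond big_distrr /=.
by apply: eq_bigr => i _; case: (coprime i beta); rewrite ?muln1 ?muln0.
Qed.

Lemma Sy_sumE t n b : 0 < b -> 0 < n ->
  Sy t n b = \sum_(1 <= beta < t.+1) t %/ beta * coprime_sum beta (num_below n b beta).
Proof.
move=> b0 n0; apply: eq_big_nat => beta /andP[be0 bet]; rewrite ltnS in bet.
rewrite (eq_bigl (fun a => coprime a beta && (a <= num_below n b beta))); last first.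
  by move=> a; rewrite /inSt be0 bet num_belowP ?muln_gt0 ?n0.
rewrite sum_nat_truncate ?num_below_le // big_mkcond big_distrr /=.
by apply: eq_bigr => i _; case: (coprime i beta); rewrite ?mul1n ?mul0n ?muln0.
Qed.

Lemma Ht_sumE t :
  Ht t = \sum_(1 <= beta < t.+1) edge_width t beta * coprime_count beta beta.
Proof.
apply: eq_bigr => x _; rewrite big_mkcond big_distrr /=; apply: eq_bigr => i _.
by rewrite coprime_sym; case: (coprime i x); rewrite ?muln1 ?muln0.
Qed.

Definition two_pow_omega (b : nat) : nat := 2 ^ size (primes b).

Fixpoint subset_prods (P : seq nat) : seq nat :=
  if P is p :: P' then subset_prods P' ++ map (muln p) (subset_prods P') else [:: 1].

Lemma size_subset_prods P : size (subset_prods P) = 2 ^ size P.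
Proof. by elim: P => //= p P IH; rewrite size_cat size_map IH expnS mul2n addnn. Qed.

Lemma subset_prods_dvd P d : d \in subset_prods P -> d %| \prod_(p <- P) p.
Proof.
elim: P d => [|p P IH] d /=; first by rewrite inE => /eqP ->; rewrite big_nil.
rewrite mem_cat big_cons => /orP[/IH h|/mapP[e /IH h ->]]; last by rewrite dvdn_mul.
by apply: dvdn_trans h _; apply: dvdn_mull.
Qed.

Lemma uniq_subset_prods P : uniq P -> all prime P -> uniq (subset_prods P).
Proof.
elim: P => [|p P IH] //= /andP[pP uP] /andP[pp aP].
rewrite cat_uniq IH // map_inj_uniq ?IH //; last first.
  by move=> x y /eqP; rewrite eqn_mul2l (gtn_eqF (prime_gt0 pp)) => /eqP.
rewrite andbT; apply/hasPn => x /mapP[e _ ->]; apply/negP => /subset_prods_dvd h.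
have : p %| \prod_(q <- P) q by apply: dvdn_trans h; apply: dvdn_mulr.
by rewrite prime_dvd_prodE // (negbTE pP).
Qed.

Definition divisor_count (t b : nat) : nat := \sum_(1 <= d < t.+1) (d %| b : nat).

Lemma divisor_count_le t b : divisor_count t b <= t.
Proof.
apply: leq_trans (_ : _ <= \sum_(1 <= d < t.+1) 1) _.
  by apply: leq_sum => d _; exact: leq_b1.
by rewrite sum_nat_const_nat muln1 subn1.
Qed.

Lemma two_pow_omega_le_divisor_count t b : 0 < b -> b <= t ->
  two_pow_omega b <= divisor_count t b.
Proof.
move=> b0 bt; rewrite /two_pow_omega -size_subset_prods.
have -> : divisor_count t b = size [seq d <- iota 1 t | d %| b].
  rewrite size_filter -sum1_count big_mkcond [RHS]big_mkcond /=.
  by rewrite /divisor_count /index_iota subSS subn0; apply: eq_bigr => i _; case: (i %| b).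
apply: uniq_leq_size; first exact: uniq_subset_prods (primes_uniq b) (all_prime_primes b).
move=> d /subset_prods_dvd/dvdn_trans/(_ (prod_primes_dvd b0)) db.
rewrite mem_filter db mem_iota /= (dvdn_gt0 b0 db) /=.
by have := dvdn_leq b0 db; lia.
Qed.

Lemma sum_dvdn_nat d t : 0 < d -> \sum_(1 <= b < t.+1) (d %| b : nat) = t %/ d.
Proof.
move=> d0; elim: t => [|t IH]; first by rewrite big_geq // div0n.
by rewrite big_nat_recr //= IH divnS // addnC.
Qed.

Lemma sum_divisor_count t :
  \sum_(1 <= b < t.+1) divisor_count t b = \sum_(1 <= d < t.+1) t %/ d.
Proof.
rewrite /divisor_count exchange_big /=.
by apply: eq_big_nat => d /andP[d0 _]; rewrite sum_dvdn_nat.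
Qed.

Local Open Scope ring_scope.

Lemma sumr_iota_double (R : comNzRingType) m :
  2 * \sum_(0 <= k < m) (k%:R : R) = m%:R * (m%:R - 1).
Proof.
elim: m => [|m IH]; first by rewrite big_geq // mulr0 mul0r.
by rewrite big_nat_recr //= mulrDr IH -natr1; ring.
Qed.

Lemma natr_divn_itv (R : realFieldType) N p : (0 < p)%N ->
  ((N %/ p)%:R : R) <= (N%:R / p%:R : R) < (N %/ p)%:R + 1.
Proof.
move=> p0; have hp : 0 < (p%:R : R) by rewrite ltr0n.
rewrite ler_pdivlMr // ltr_pdivrMr // -natrM ler_nat leq_divM /=.
by rewrite natr1 -natrM ltr_nat ltn_ceil.
Qed.

Section CoprimeDensity.

Variable R : realFieldType.

Definition sieve_density (P : seq nat) : R := \prod_(p <- P) (1 - p%:R^-1).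

Lemma sieve_density_itv P : all prime P -> 0 <= sieve_density P <= 1.
Proof.
elim: P => [|p P IH] /=; first by rewrite /sieve_density big_nil ler01 lexx.
case/andP=> pp /IH /andP[h0 h1]; rewrite /sieve_density big_cons -/(sieve_density P).
have hi : 0 < (p%:R : R)^-1 by rewrite invr_gt0 ltr0n prime_gt0.
have hi1 : (p%:R : R)^-1 < 1 by rewrite invf_lt1 ?ltr0n ?prime_gt0 // ltr1n prime_gt1.
apply/andP; split; first by apply: mulr_ge0; lra.
by nra.
Qed.

Lemma sieve_count_approx P N : uniq P -> all prime P ->
  `|(sieve_count P N)%:R - N%:R * sieve_density P| <= (2 ^ size P)%:R - 1.
Proof.
elim: P N => [|p P IH] N.
  move=> _ _; rewrite /sieve_density /sieve_count big_nil sum_nat_const_nat /=.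
  by rewrite muln1 subn1 mulr1 subrr normr0 subrr.
case/andP=> pP uP /andP[pp aP].
have -> : ((sieve_count (p :: P) N)%:R : R) =
    (sieve_count P N)%:R - (sieve_count P (N %/ p))%:R.
  by rewrite -(sieve_count_cons N pp pP aP) natrD addrK.
rewrite /sieve_density big_cons -/(sieve_density P) /= expnS natrM.
have := IH N uP aP; have := IH (N %/ p)%N uP aP.
have /andP[d1 d2] := natr_divn_itv R N (prime_gt0 pp).
have /andP[q0 q1] := sieve_density_itv aP.
have hp : 0 < (p%:R : R) by rewrite ltr0n prime_gt0.
move: d1 d2 q0 q1 hp.
move: ((sieve_count P N)%:R : R) ((sieve_count P (N %/ p))%:R : R) (sieve_density P)
  ((2 ^ size P)%:R : R) (N%:R : R) ((N %/ p)%:R : R) (p%:R : R).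
move=> A B Q K X Y Z d1 d2 q0 q1 hp h2 h1.
(* The only new error is the fractional part [X / Z - Y] of [N / p]. *)
have -> : A - B - X * ((1 - Z^-1) * Q) = (A - X * Q) - (B - Y * Q) + (X / Z - Y) * Q.
  by field; lra.
have h3 : 0 <= (X / Z - Y) * Q <= 1 by apply/andP; split; nra.
move: h1 h2; rewrite !ler_norml => /andP[? ?] /andP[? ?].
apply/andP; split; lra.
Qed.

Lemma sieve_count_exact P N : uniq P -> all prime P ->
  (\prod_(p <- P) p %| N)%N -> (sieve_count P N)%:R = N%:R * sieve_density P.
Proof.
elim: P N => [|p P IH] N.
  move=> _ _ _; rewrite /sieve_density /sieve_count big_nil /=.
  by rewrite sum_nat_const_nat muln1 subn1 mulr1.
case/andP=> pP uP /andP[pp aP]; rewrite big_cons => dvN.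
have pN : (p %| N)%N by apply: dvdn_trans dvN; apply: dvdn_mulr.
have -> : ((sieve_count (p :: P) N)%:R : R) =
    (sieve_count P N)%:R - (sieve_count P (N %/ p))%:R.
  by rewrite -(sieve_count_cons N pp pP aP) natrD addrK.
rewrite (IH N uP aP) ?(dvdn_trans _ dvN) ?dvdn_mull // (IH _ uP aP); last first.
  by rewrite dvdn_divRL // mulnC.
rewrite /sieve_density big_cons -/(sieve_density P).
rewrite natr_div // ?unitfE ?pnatr_eq0 -?lt0n ?prime_gt0 //.
by field; rewrite pnatr_eq0 -lt0n prime_gt0.
Qed.

Definition coprime_density b := sieve_density (primes b).

Lemma coprime_density_itv b : 0 <= coprime_density b <= 1.
Proof. exact/sieve_density_itv/all_prime_primes. Qed.

Lemma coprime_count_self b : (0 < b)%N ->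
  (coprime_count b b)%:R = b%:R * coprime_density b.
Proof.
move=> b0; rewrite coprime_count_sieve // sieve_count_exact //.
  exact: primes_uniq.
  exact: all_prime_primes.
exact: prod_primes_dvd.
Qed.

Definition coprime_count_error b k : R := (coprime_count b k)%:R - k%:R * coprime_density b.

Lemma coprime_count_error_bound b k : (0 < b)%N ->
  `|coprime_count_error b k| <= (two_pow_omega b)%:R.
Proof.
move=> b0; rewrite /coprime_count_error coprime_count_sieve //.
apply: le_trans (sieve_count_approx _ (primes_uniq b) (all_prime_primes b)) _.
by rewrite lerBlDr lerDl.
Qed.

Lemma coprime_count_error_periodic b k : (0 < b)%N ->
  coprime_count_error b (k + b) = coprime_count_error b k.
Proof.
move=> b0; rewrite /coprime_count_error coprime_count_periodic natrD.
by rewrite coprime_count_self // natrD; ring.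
Qed.

Definition coprime_error_sum b m := \sum_(0 <= k < m) coprime_count_error b k.

Lemma coprime_error_sumE b m : coprime_error_sum b m =
  \sum_(0 <= k < m) (coprime_count b k)%:R - (\sum_(0 <= k < m) k%:R) * coprime_density b.
Proof. by rewrite /coprime_error_sum /coprime_count_error sumrB mulr_suml. Qed.

Lemma coprime_error_sum_shift b m : (0 < b)%N ->
  coprime_error_sum b (b + m) = coprime_error_sum b b + coprime_error_sum b m.
Proof.
move=> b0; rewrite /coprime_error_sum (@big_cat_nat _ _ _ b) ?leq_addr //=.
congr (_ + _); rewrite -{1}(add0n b) big_addn addKn.
by apply: eq_bigr => k _; rewrite coprime_count_error_periodic.
Qed.

Lemma coprime_error_sum_small b r : (0 < b)%N ->
  `|coprime_error_sum b r| <= r%:R * (two_pow_omega b)%:R.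
Proof.
move=> b0; elim: r => [|r IH]; first by rewrite /coprime_error_sum big_geq // normr0 mul0r.
rewrite /coprime_error_sum big_nat_recr //= mulrSr mulrDl mul1r.
exact: le_trans (ler_normD _ _) (lerD IH (coprime_count_error_bound _ b0)).
Qed.

Lemma coprime_error_sum_linear b m : (0 < b)%N ->
  `|coprime_error_sum b m - m%:R / b%:R * coprime_error_sum b b|
    <= 2 * b%:R * (two_pow_omega b)%:R.
Proof.
move=> b0; have hb : 0 < (b%:R : R) by rewrite ltr0n.
have periodic q r : coprime_error_sum b (q * b + r) =
    q%:R * coprime_error_sum b b + coprime_error_sum b r.
  elim: q => [|q IH]; first by rewrite mul0r add0r.
  by rewrite mulSn -addnA coprime_error_sum_shift // IH mulrSr; ring.
rewrite {1}(divn_eq m b) periodic.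
have -> : (m%:R : R) = (m %/ b)%:R * b%:R + (m %% b)%:R by rewrite {1}(divn_eq m b) natrD natrM.
set r := (m %% b)%N; set E := coprime_error_sum b b.
have -> : (m %/ b)%:R * E + coprime_error_sum b r - ((m %/ b)%:R * b%:R + r%:R) / b%:R * E =
    coprime_error_sum b r - r%:R / b%:R * E.
  by field; lra.
have rb : (r%:R : R) <= b%:R by rewrite ler_nat ltnW // ltn_mod.
have r0 : (0 : R) <= r%:R by [].
have := coprime_error_sum_small r b0; have := coprime_error_sum_small b b0.
have : 1 <= ((two_pow_omega b)%:R : R) by rewrite ler1n expn_gt0.
rewrite -/E; move: ((two_pow_omega b)%:R : R) (r%:R : R) (b%:R : R) rb r0 hb.
move=> D X B rb r0 hb D1 hE hr.
apply: le_trans (ler_normB _ _) _; rewrite normrM ger0_norm ?divr_ge0 ?(ltW hb) //.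
have : X / B * `|E| <= B * D.
  rewrite mulrAC ler_pdivrMr //; have := normr_ge0 E; nra.
have : X * D <= B * D by nra.
lra.
Qed.

Lemma coprime_error_sum_self b : (0 < b)%N ->
  coprime_error_sum b b = b%:R * (coprime_density b - (b == 1%N)%:R) / 2.
Proof.
move=> b0; rewrite coprime_error_sumE.
have e1 : (coprime_sum b b)%:R + \sum_(0 <= k < b) ((coprime_count b k)%:R : R) =
    b%:R * (coprime_count b b)%:R by rewrite -natr_sum -natrD coprime_sum_abel natrM.
have e2 : 2 * ((coprime_sum b b)%:R : R) = b%:R * (coprime_count b b)%:R + (b == 1%N)%:R.
  by rewrite -[2]/(2%:R) -natrM coprime_sum_self // natrD natrM.
have e3 := sumr_iota_double R b.
have e4 : (b == 1%N)%:R * (b%:R : R) = (b == 1%N)%:R by case: eqP => [->|]; rewrite ?mulr1 ?mul0r.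
move: e1 e2 e3 e4; rewrite coprime_count_self //.
move: (\sum_(0 <= k < b) ((coprime_count b k)%:R : R)) (\sum_(0 <= k < b) (k%:R : R))
  ((coprime_sum b b)%:R : R) (b%:R : R)
  ((b == 1%N)%:R : R) (coprime_density b) => SF SK SS B I P e1 e2 e3 e4.
have -> : SF = B * (B * P) - SS by rewrite -e1; ring.
have -> : SS = (B * (B * P) + I * B) / 2 by rewrite e4 -e2; field.
have -> : SK = B * (B - 1) / 2 by rewrite -e3; field.
by field.
Qed.

Lemma coprime_count_approx b m (M : R) : (0 < b)%N -> m%:R <= M <= m%:R + 1 ->
  `|(coprime_count b m)%:R - M * coprime_density b| <= (two_pow_omega b)%:R + 1.
Proof.
move=> b0 /andP[h1 h2].
have := coprime_count_error_bound m b0; rewrite /coprime_count_error !ler_norml.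
have /andP[p0 p1] := coprime_density_itv b.
move: ((coprime_count b m)%:R : R) (m%:R : R) (coprime_density b)
  ((two_pow_omega b)%:R : R) h1 h2 p0 p1.
by move=> X Y P D *; apply/andP; split; nra.
Qed.

(* Summation by parts turns [coprime_sum] into a sum of [coprime_count]s, whose
   errors average out to [coprime_error_sum_self] over each period. *)
Lemma coprime_sum_approx b m (M : R) : (0 < b)%N -> m%:R <= M <= m%:R + 1 ->
  `|(M * (coprime_count b m)%:R - (coprime_sum b m)%:R)
      - (M ^+ 2 * coprime_density b / 2 - (b == 1%N)%:R * M / 2)|
    <= 3 * b%:R * ((two_pow_omega b)%:R + 1).
Proof.
move=> b0 /andP[h1 h2].
have hb : 1 <= (b%:R : R) by rewrite ler1n.
have e1 : (coprime_sum b m)%:R + \sum_(0 <= k < m) ((coprime_count b k)%:R : R) =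
    m%:R * (coprime_count b m)%:R by rewrite -natr_sum -natrD coprime_sum_abel natrM.
have e3 := sumr_iota_double R m.
have eb := coprime_error_sum_self b0.
have hE := coprime_error_sum_linear m b0.
have herr := coprime_count_error_bound m b0.
rewrite /coprime_count_error in herr.
have /andP[p0 p1] := coprime_density_itv b.
have hD : 1 <= ((two_pow_omega b)%:R : R) by rewrite ler1n expn_gt0.
have hI : 0 <= ((b == 1%N)%:R : R) <= 1 by case: (b == 1%N); rewrite /= ?lexx ?ler01.
rewrite coprime_error_sumE in hE.
move: e1 e3 eb hE herr hI.
move: ((coprime_count b m)%:R : R) (m%:R : R) (coprime_density b) ((two_pow_omega b)%:R : R)
  ((coprime_sum b m)%:R : R) (coprime_error_sum b b)
  (\sum_(0 <= k < m) ((coprime_count b k)%:R : R)) (\sum_(0 <= k < m) (k%:R : R))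
  (b%:R : R) ((b == 1%N)%:R : R) h1 h2 p0 p1 hb hD
  => X Y P D SS Eb SF SK B I h1 h2 p0 p1 hb hD e1 e3 eb hE herr /andP[I0 I1].
have B0 : B != 0 by apply/eqP => B0; rewrite B0 in hb; lra.
have key : M * X - SS - (M ^+ 2 * P / 2 - I * M / 2) =
    (M - Y) * (X - Y * P) + (SF - SK * P - Y / B * Eb)
      - (M - Y) ^+ 2 * P / 2 + I * (M - Y) / 2.
  have -> : SS = Y * X - SF by rewrite -e1; ring.
  have -> : SK = Y * (Y - 1) / 2 by rewrite -e3; field.
  by rewrite eb; field.
have d01 : 0 <= M - Y <= 1 by apply/andP; split; lra.
rewrite key; move: hE herr; rewrite !ler_norml; move: d01.
move: (M - Y) (X - Y * P) => d e /andP[d0 d1] /andP[E_lo E_hi] /andP[e_lo e_hi].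
have q1 : - D <= d * e <= D by apply/andP; split; nra.
have q2 : 0 <= d ^+ 2 * P <= 1.
  have s0 : 0 <= d ^+ 2 by rewrite sqr_ge0.
  have s1 : d ^+ 2 <= 1 by rewrite expr_le1.
  by apply/andP; split; nra.
have q3 : 0 <= I * d <= 1 by apply/andP; split; nra.
have BD : D <= B * D by nra.
move: q1 q2 q3 => /andP[? ?] /andP[? ?] /andP[? ?]; apply/andP; split; lra.
Qed.

End CoprimeDensity.

Lemma num_below_itv (R : realFieldType) n b beta : (0 < b)%N -> (0 < n * beta)%N ->
  (num_below n b beta)%:R <= ((n * beta)%:R / b%:R : R) <= (num_below n b beta)%:R + 1.
Proof.
move=> b0 nb0; have hb : (0 : R) < b%:R by rewrite ltr0n.
rewrite ler_pdivlMr // ler_pdivrMr // -natrM ler_nat natr1 -natrM ler_nat.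
apply/andP; split; first by apply: leq_trans (leq_divM _ _) _; lia.
by have := ltn_ceil (n * beta).-1 b0; rewrite -/(num_below n b beta); lia.
Qed.

Section EdgeCoordinates.

Variable R : realFieldType.

Definition edge_error (t : nat) : R :=
  \sum_(1 <= beta < t.+1) (edge_width t beta)%:R * ((two_pow_omega beta)%:R + 1).

Lemma edge_error_ge0 t : 0 <= edge_error t.
Proof. by apply: sumr_ge0 => i _; rewrite mulr_ge0 // addr_ge0. Qed.

Lemma Sx_term_approx t n b beta : (0 < b)%N -> (0 < n)%N -> (0 < beta)%N ->
  `|(edge_width t beta * coprime_count beta (num_below n b beta))%:R
     - n%:R / b%:R * (edge_width t beta * coprime_count beta beta)%:R|
   <= (edge_width t beta)%:R * ((two_pow_omega beta)%:R + 1) :> R.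
Proof.
move=> b0 n0 be0; have nb0 : (0 < n * beta)%N by rewrite muln_gt0 n0.
have hA := coprime_count_approx be0 (num_below_itv R b0 nb0).
rewrite !(natrM R (edge_width t beta)) coprime_count_self //.
have -> : n%:R / b%:R * ((edge_width t beta)%:R * (beta%:R * coprime_density R beta)) =
    (edge_width t beta)%:R * ((n * beta)%:R / b%:R * coprime_density R beta) :> R.
  by rewrite natrM; ring.
by rewrite -mulrBr normrM ger0_norm // ler_wpM2l.
Qed.

Lemma Sy_term_approx t n b beta : (0 < b)%N -> (0 < n)%N -> (0 < beta)%N ->
  `|(t %/ beta * coprime_sum beta (num_below n b beta))%:R
     - n%:R / b%:R * (edge_width t beta * coprime_count beta (num_below n b beta))%:R
     + (n%:R / b%:R) ^+ 2 / 2 * (edge_width t beta * coprime_count beta beta)%:R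
     - (beta == 1%N)%:R * (t%:R * (n%:R / b%:R) / 2)|
   <= 3 * ((edge_width t beta)%:R * ((two_pow_omega beta)%:R + 1)) :> R.
Proof.
move=> b0 n0 be0; have nb0 : (0 < n * beta)%N by rewrite muln_gt0 n0.
have hB := coprime_sum_approx be0 (num_below_itv R b0 nb0).
have hb : (b%:R : R) != 0 by rewrite pnatr_eq0 -lt0n.
(* With M = n beta / b, the summand is -(t / beta) times the quantity bounded in [hB]. *)
set M : R := (n * beta)%:R / b%:R.
set X := coprime_count beta (num_below n b beta); set S := coprime_sum beta (num_below n b beta).
have -> : (t %/ beta * S)%:R - n%:R / b%:R * (edge_width t beta * X)%:R
     + (n%:R / b%:R) ^+ 2 / 2 * (edge_width t beta * coprime_count beta beta)%:R
     - (beta == 1%N)%:R * (t%:R * (n%:R / b%:R) / 2)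
   = - ((t %/ beta)%:R * ((M * X%:R - S%:R)
        - (M ^+ 2 * coprime_density R beta / 2 - (beta == 1%N)%:R * M / 2))).
  rewrite /M /edge_width !natrM coprime_count_self //.
  by case: (eqVneq beta 1%N) => [->|_] /=; rewrite ?mulr0n ?mulr1n ?divn1; field.
rewrite normrN normrM ger0_norm // /edge_width natrM.
apply: le_trans (ler_wpM2l _ hB) _ => //.
by rewrite le_eqVlt; apply/orP; left; apply/eqP; ring.
Qed.

Lemma Sx_approx t n b : (0 < b)%N -> (0 < n)%N ->
  `|(Sx t n b)%:R - n%:R / b%:R * (Ht t)%:R| <= edge_error t.
Proof.
move=> b0 n0; rewrite Sx_sumE // Ht_sumE !natr_sum mulr_sumr -sumrB.
apply: le_trans (ler_norm_sum _ _ _) _.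
by apply: ler_sum_nat => beta /andP[be0 _]; apply: Sx_term_approx.
Qed.

Lemma Sy_approx t n b : (0 < b)%N -> (0 < n)%N -> (0 < t)%N ->
  `|(Sy t n b)%:R - n%:R / b%:R * (Sx t n b)%:R
     + (n%:R / b%:R) ^+ 2 / 2 * (Ht t)%:R - t%:R * (n%:R / b%:R) / 2| <= 3 * edge_error t.
Proof.
move=> b0 n0 t0.
have -> : t%:R * (n%:R / b%:R) / 2 =
    \sum_(1 <= beta < t.+1) (beta == 1%N)%:R * (t%:R * (n%:R / b%:R) / 2) :> R.
  rewrite big_ltn // eqxx mul1r big1_seq ?addr0 // => i /andP[_].
  by rewrite mem_index_iota => /andP[i2 _]; rewrite gtn_eqF // mul0r.
rewrite Sy_sumE // Sx_sumE // Ht_sumE !natr_sum !mulr_sumr -sumrB -big_split -sumrB.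
apply: le_trans (ler_norm_sum _ _ _) _.
by apply: ler_sum_nat => beta /andP[be0 _]; apply: Sy_term_approx.
Qed.

End EdgeCoordinates.

(* Completing the square: with [e1 := x - s H], the deviation equals
   [e2 - (T / 2 + e1) ^+ 2 / (2 H)], where [e2] is the quantity bounded by [3 K]. *)
Lemma parabola_deviation (R : realFieldType) (y x s H K T : R) :
  0 < H -> 0 <= T -> 0 <= K -> `|x - s * H| <= K + T ->
  `|y - s * x + s ^+ 2 / 2 * H - T * s / 2| <= 3 * K ->
  `|y - (T / 2 + x) ^+ 2 / (2 * H)| <= 3 * K + (K + 2 * T) ^+ 2 / (2 * H).
Proof.
move=> H0 T0 K0; set e1 := x - s * H; set e2 := y - s * x + _ - _ => h1 h2.
have -> : y - (T / 2 + x) ^+ 2 / (2 * H) = e2 - (T / 2 + e1) ^+ 2 / (2 * H).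
  by rewrite /e1 /e2; field; lra.
apply: le_trans (ler_normB _ _) (lerD h2 _).
rewrite ger0_norm ?divr_ge0 ?sqr_ge0 ?mulr_ge0 ?(ltW H0) //.
rewrite ler_pM2r ?invr_gt0 ?mulr_gt0 //.
move: h1; rewrite ler_norml => /andP[a1 a2].
have q1 : - (K + 2 * T) <= T / 2 + e1 by lra.
have q2 : T / 2 + e1 <= K + 2 * T by lra.
by rewrite !expr2; nra.
Qed.

Lemma edge_deviation (R : realFieldType) t n b (l : R) :
  (0 < t)%N -> (0 < n)%N -> (0 < b)%N -> (b <= t)%N -> 0 <= l -> l <= 1 -> 0 < (Ht t)%:R :> R ->
  `|((Sy t n b)%:R + l * (t %/ b * n)%:R) -
    (t%:R / 2 + (Sx t n b)%:R + l * (t %/ b * b)%:R) ^+ 2 / (2 * (Ht t)%:R)|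
  <= 3 * edge_error R t + (edge_error R t + 2 * t%:R) ^+ 2 / (2 * (Ht t)%:R).
Proof.
move=> t0 n0 b0 bt l0 l1 H0; rewrite -[t%:R / 2 + _ + _]addrA.
have K0 := edge_error_ge0 R t.
apply: (parabola_deviation (s := n%:R / b%:R)) => //.
- have hW : ((t %/ b * b)%:R : R) <= t%:R by rewrite ler_nat leq_divM.
  have hl : 0 <= l * (t %/ b * b)%:R <= t%:R.
    apply/andP; split; first exact: mulr_ge0.
    by move: hW (ler0n R (t %/ b * b)); move: (t %/ b * b)%:R (t%:R : R) => W T; nra.
  rewrite addrAC; apply: le_trans (ler_normD _ _) (lerD (Sx_approx R t b0 n0) _).
  by case/andP: hl => hl0 hlt; rewrite ger0_norm.
- have -> : (Sy t n b)%:R + l * (t %/ b * n)%:R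
        - n%:R / b%:R * ((Sx t n b)%:R + l * (t %/ b * b)%:R)
      = (Sy t n b)%:R - n%:R / b%:R * (Sx t n b)%:R :> R.
    by rewrite !natrM; field; rewrite pnatr_eq0 -lt0n.
  exact: Sy_approx.
Qed.

Lemma on_grid_parabola_deviation (R : realType) t (x y : R) :
  (0 < t)%N -> 0 < (Ht t)%:R :> R -> on_grid_parabola t x y ->
  `|y - x ^+ 2 / (2 * (Ht t)%:R)|
    <= 3 * edge_error R t + (edge_error R t + 2 * t%:R) ^+ 2 / (2 * (Ht t)%:R).
Proof.
move=> t0 H0 [n [b [neg [l [/andP[/andP[b0 bt] _] l0 l1]]]]].
have K0 := edge_error_ge0 R t.
case: (eqVneq n 0%N) => [_ [-> ->]|nn0 /= [-> ->]]; last first.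
  by case: neg; rewrite ?sqrrN; apply: edge_deviation; rewrite // lt0n.
move: K0 H0 l0 l1; move: (edge_error R t) (t%:R : R) ((Ht t)%:R : R) (ler0n R t).
move=> K T H T0 K0 H0 l0 l1.
have z1 : - (K + 2 * T) <= - (T / 2) + l * T by nra.
have z2 : - (T / 2) + l * T <= K + 2 * T by nra.
have hz : (- (T / 2) + l * T) ^+ 2 <= (K + 2 * T) ^+ 2 by rewrite !expr2; nra.
rewrite sub0r normrN ger0_norm ?divr_ge0 ?sqr_ge0 ?mulr_ge0 ?(ltW H0) //.
have : (- (T / 2) + l * T) ^+ 2 / (2 * H) <= (K + 2 * T) ^+ 2 / (2 * H).
  by rewrite ler_pM2r // invr_gt0 mulr_gt0.
have : 0 <= (K + 2 * T) ^+ 2 / (2 * H) by rewrite divr_ge0 ?sqr_ge0 ?mulr_ge0 ?(ltW H0).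
lra.
Qed.

Lemma harmonic_le_ln (R : realType) (t : nat) : (0 < t)%N ->
  \sum_(1 <= d < t.+1) (d%:R : R)^-1 <= 1 + ln t%:R.
Proof.
elim: t => [//|[|t] IH _]; first by rewrite big_nat1 invr1 ln1 addr0.
rewrite big_nat_recr //=.
suff : (t.+2%:R : R)^-1 <= ln t.+2%:R - ln t.+1%:R.
  by move=> hc; apply: le_trans (lerD (IH isT) hc) _; lra.
have lnD : ln (t.+1%:R : R) - ln t.+2%:R = ln (1 - (t.+2%:R)^-1).
  rewrite -ln_div ?posrE ?ltr0n //; congr ln.
  rewrite [t.+2%:R]mulrSr; field; apply: lt0r_neq0; have := ler0n R t; lra.
have : - 1 < - (t.+2%:R : R)^-1 by rewrite ltrN2 invf_lt1 ?ltr0n // ltr1n.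
move/le_ln1Dx; rewrite -lnD.
by move: (ln (t.+1%:R : R)) (ln (t.+2%:R : R)) ((t.+2%:R : R)^-1) => a b c; lra.
Qed.

Lemma sum_divn_le (R : realType) (t : nat) : (0 < t)%N ->
  \sum_(1 <= d < t.+1) ((t %/ d)%:R : R) <= t%:R * (1 + ln t%:R).
Proof.
move=> t0; apply: le_trans (ler_wpM2l (ler0n R t) (harmonic_le_ln R t0)); rewrite mulr_sumr.
apply: ler_sum_nat => d /andP[d0 _].
by rewrite ler_pdivlMr ?ltr0n // -natrM ler_nat leq_divM.
Qed.

Lemma edge_error_le (R : realType) t : (0 < t)%N ->
  edge_error R t <= 2 * t%:R ^+ 2 * (1 + ln (t%:R : R)).
Proof.
move=> t0.
apply: le_trans (_ : _ <= \sum_(1 <= b < t.+1) 2 * t%:R * (divisor_count t b)%:R) _.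
  apply: ler_sum_nat => b /andP[b0 bt]; rewrite ltnS in bt.
  have hW : ((edge_width t b)%:R : R) <= t%:R by rewrite ler_nat leq_divM.
  have hD : ((two_pow_omega b)%:R : R) <= (divisor_count t b)%:R.
    by rewrite ler_nat two_pow_omega_le_divisor_count.
  have hD1 : (1 : R) <= (two_pow_omega b)%:R by rewrite ler1n expn_gt0.
  move: hW hD hD1 (ler0n R (edge_width t b)).
  move: ((edge_width t b)%:R : R) ((two_pow_omega b)%:R : R) ((divisor_count t b)%:R : R).
  by move: (t%:R : R) => T W D C *; nra.
rewrite -mulr_sumr -natr_sum sum_divisor_count natr_sum expr2 -!mulrA.
by rewrite ler_wpM2l // ler_wpM2l // sum_divn_le.
Qed.

Lemma sieve_density_sorted_ge (R : realFieldType) P (m : nat) : (0 < m)%N ->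
  sorted ltn P -> all (fun p => m < p)%N P -> all prime P ->
  (m%:R : R) <= sieve_density R P * (m + size P)%:R.
Proof.
elim: P m => [|p P IH] m m0 /=; first by rewrite /sieve_density big_nil mul1r addn0.
move=> sP /andP[mp aP] /andP[pp prP].
have aP' : all (fun q => m.+1 < q)%N P.
  apply/allP => q qP; have := allP (order_path_min ltn_trans sP) q qP.
  by move: mp => /=; lia.
have := IH m.+1 isT (path_sorted sP) aP' prP.
rewrite /sieve_density big_cons -/(sieve_density R P) addnS -addSn -mulrA.
have hm : (0 : R) < m.+1%:R by rewrite ltr0n.
have q0 : 0 <= 1 - (p%:R : R)^-1.
  by rewrite subr_ge0 invf_le1 ?ler1n ?ltr0n; lia.
have q1 : 1 - (m.+1%:R : R)^-1 <= 1 - (p%:R)^-1.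
  by rewrite lerD2l lerN2 lef_pV2 ?posrE ?ltr0n ?ler_nat; lia.
move=> h; apply: le_trans (ler_wpM2l q0 h).
apply: le_trans (ler_wpM2r (ltW hm) q1).
by rewrite mulrBl mulVf ?mul1r ?lt0r_neq0 // -natr1 addrK.
Qed.

Lemma coprime_density_ge (R : realFieldType) b : (0 < b)%N ->
  1 <= coprime_density R b * (1 + size (primes b))%:R.
Proof.
move=> b0; apply: (@sieve_density_sorted_ge R (primes b) 1) => //.
- exact: sorted_primes.
- by apply/allP => p; rewrite mem_primes => /and3P[pp _ _]; apply: prime_gt1.
- exact: all_prime_primes.
Qed.

Lemma omega_mul_ln2_le (R : realType) (b t : nat) : (0 < b)%N -> (b <= t)%N ->
  (size (primes b))%:R * ln (2 : R) <= ln (t%:R : R).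
Proof.
move=> b0 bt.
have : ((2 ^ size (primes b))%:R : R) <= t%:R.
  rewrite ler_nat; apply: leq_trans (divisor_count_le t b).
  exact: two_pow_omega_le_divisor_count.
rewrite -ler_ln ?posrE ?ltr0n ?expn_gt0 //; last by apply: leq_trans bt.
by rewrite natrX lnXn // mulr_natl.
Qed.

Lemma coprime_count_self_ge (R : realType) (b t : nat) : (0 < b)%N -> (b <= t)%N ->
  b%:R * ln (2 : R) <= (coprime_count b b)%:R * (ln 2 + ln t%:R).
Proof.
move=> b0 bt; rewrite coprime_count_self //.
have h1 := coprime_density_ge R b0; have h2 := omega_mul_ln2_le R b0 bt.
have L0 : 0 < ln (2 : R) by rewrite ln_gt0 // ltr1n.
have /andP[p0 _] := coprime_density_itv R b.
rewrite natrD in h1; move: h1 h2 L0 p0 (ler0n R b).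
move: (coprime_density R b) ((size (primes b))%:R : R) (ln (2 : R)) (ln (t%:R : R)) (b%:R : R).
move=> P k L lt B h1 h2 L0 p0 hb.
have : B * L <= B * (P * (1 + k) * L).
  by apply: ler_wpM2l => //; rewrite -[X in X <= _]mul1r; apply: ler_wpM2r; lra.
have : B * P * (k * L) <= B * P * lt by apply: ler_wpM2l => //; apply: mulr_ge0.
by nra.
Qed.

Lemma edge_width_ge (b t : nat) : (0 < b)%N -> (b <= t)%N -> (t <= 2 * edge_width t b)%N.
Proof.
move=> b0 bt; have := ltn_ceil t b0; have : (1 <= t %/ b)%N by rewrite leq_divRL // mul1n.
by rewrite /edge_width mulSn; nia.
Qed.

Lemma Ht_ge (R : realType) (t : nat) : (0 < t)%N ->
  t%:R ^+ 3 * ln (2 : R) <= (Ht t)%:R * (4 * (ln 2 + ln t%:R)).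
Proof.
move=> t0; have L0 : 0 < ln (2 : R) by rewrite ln_gt0 // ltr1n.
have lt0 : 0 <= ln (t%:R : R) by rewrite ln_ge0 // ler1n.
rewrite Ht_sumE natr_sum mulr_suml.
apply: le_trans (_ : _ <= \sum_(1 <= b < t.+1) 2 * t%:R * b%:R * ln 2) _.
  have := sumr_iota_double R t.+1; rewrite big_ltn // add0r -[t.+1%:R]natr1 addrK.
  rewrite -!mulr_suml -mulr_sumr.
  move: (\sum_(1 <= b < t.+1) (b%:R : R)) (ler0n R t); move: (t%:R : R) => T S TT hS.
  rewrite (_ : 2 * T * S = T * (2 * S)); last by ring.
  rewrite hS.
  have : 0 <= T * T * ln (2 : R) by rewrite !mulr_ge0 // ltW.
  by move: (ln (2 : R)) L0 => L L0; rewrite !exprS expr0 mulr1; nra.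
apply: ler_sum_nat => b /andP[b0 bt]; rewrite ltnS in bt.
have hw : (t%:R : R) <= 2 * (edge_width t b)%:R by rewrite -natrM ler_nat edge_width_ge.
have hp := coprime_count_self_ge R b0 bt.
rewrite !natrM -/(edge_width t b) -[(t %/ b)%:R * _]natrM.
move: hw hp (ler0n R (coprime_count b b)) (ler0n R b) (ler0n R (edge_width t b)) L0 lt0.
move: (ln (t%:R : R)) (ln (2 : R)) => lt L.
move: (t%:R : R) (b%:R : R) ((edge_width t b)%:R : R) ((coprime_count b b)%:R : R).
move=> T B W F hw hp hF hB hW L0 lt0.
have h1 : T * (B * L) <= 2 * W * (B * L) by rewrite ler_wpM2r // mulr_ge0 // ltW.
have h2 : W * (B * L) <= W * (F * (L + lt)) by rewrite ler_wpM2l.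
by nra.
Qed.

Lemma ln_sqr_le (R : realType) (t : R) : 1 <= t -> ln t ^+ 2 <= 4 * t.
Proof.
move=> t1; have t0 : 0 <= t by lra.
set v := Num.sqrt t; have v0 : 0 < v by rewrite sqrtr_gt0; lra.
have vt : v ^+ 2 = t by rewrite sqr_sqrtr.
have lnv0 : 0 <= ln v by rewrite ln_ge0 // -(sqrtr1 R) ler_sqrt.
have lnv : ln v < v := ln_sublinear v0.
rewrite -vt expr2 lnM ?posrE //; move: lnv0 lnv (ltW v0); move: (ln v) => a *.
by rewrite !expr2; nra.
Qed.

Lemma deviation_growth (R : realFieldType) (c L : R) : 0 < c -> 0 < L ->
  exists C : R, forall t u K H : R,
    1 <= t -> c <= u -> u ^+ 2 <= 4 * t -> 0 <= K -> K <= 2 * t ^+ 2 * (1 + u) ->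
    t ^+ 3 * L <= H * (4 * (L + u)) ->
    3 * K + (K + 2 * t) ^+ 2 / (2 * H) <= C * t ^+ 2 * u.
Proof.
move=> c0 L0; set ic := c^-1; have ic0 : 0 < ic by rewrite invr_gt0.
pose k := 2 * (1 + ic); pose a := k + 2 * ic; pose g := 1 + L * ic; pose h := L / (4 * g).
have g0 : 0 < g by rewrite ltr_wpDr ?mulr_ge0 ?ltW.
have h0 : 0 < h by rewrite divr_gt0 // mulr_gt0.
exists (3 * k + 2 * a ^+ 2 / h) => t u K H t1 cu u2 K0 Kb Hb.
have u0 : 0 < u by lra.
have uic : 1 <= u * ic by rewrite ler_pdivlMr // mul1r.
have w1 : 1 <= t ^+ 2 by rewrite expr2; nra.
have tw : t <= t ^+ 2 by rewrite expr2; nra.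
rewrite exprSr mulrC in Hb; move: (t ^+ 2) w1 tw Kb Hb => w w1 tw Kb Hb.
have Kk : K <= k * (w * u) by rewrite /k; nra.
have Ka : K + 2 * t <= a * (w * u) by rewrite /a /k; nra.
have H0 : 0 < H.
  have : 0 < H * (4 * (L + u)) by apply: lt_le_trans Hb; rewrite !mulr_gt0 //; lra.
  by rewrite pmulr_lgt0 // mulr_gt0 //; lra.
have Hh : h * (w * u) <= 4 * H.
  rewrite /h mulrAC ler_pdivrMr; last by rewrite mulr_gt0.
  rewrite -(ler_pM2l (lt_le_trans ltr01 t1)).
  have e1 := ler_wpM2r (ltW u0) Hb.
  have e2 : H * (4 * (L + u)) * u <= H * (4 * (g * u)) * u.
    apply: (ler_wpM2r (ltW u0)); apply: (ler_wpM2l (ltW H0)).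
    by apply: ler_wpM2l => //; rewrite /g; nra.
  have e3 : 4 * H * g * (u * u) <= 4 * H * g * (4 * t).
    by apply: ler_wpM2l; [nra | rewrite -expr2].
  lra.
have hX : (K + 2 * t) ^+ 2 * h <= a ^+ 2 * (w * u) * (4 * H).
  have X2 : (K + 2 * t) ^+ 2 <= (a * (w * u)) ^+ 2.
    by rewrite ler_pXn2r ?nnegrE //; lra.
  apply: le_trans (ler_wpM2r (ltW h0) X2) _.
  have -> : (a * (w * u)) ^+ 2 * h = a ^+ 2 * (w * u) * (h * (w * u)) by ring.
  by apply: (ler_wpM2l _ Hh); apply: mulr_ge0; [exact: sqr_ge0 | nra].
have : (K + 2 * t) ^+ 2 / (2 * H) <= 2 * a ^+ 2 / h * (w * u).
  rewrite -ler_pdivlMr // in hX; rewrite ler_pdivrMr ?mulr_gt0 //; apply: le_trans hX _.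
  by rewrite le_eqVlt; apply/orP; left; apply/eqP; field; rewrite !gt_eqF.
have : 3 * K <= 3 * k * (w * u) by lra.
by rewrite -mulrA; lra.
Qed.

Theorem proposition2 (R : realType) :
  exists (C : R) (t0 : nat), forall t : nat, (t0 <= t)%N ->
    forall x y : R, on_grid_parabola t x y ->
      `| y - x ^+ 2 / (2 * (Ht t)%:R) | <= C * (t%:R) ^+ 2 * ln (t%:R).
Proof.
have c0 : 0 < ln (3 : R) by rewrite ln_gt0 // ltr1n.
have L0 : 0 < ln (2 : R) by rewrite ln_gt0 // ltr1n.
have [C growth] := deviation_growth c0 L0.
exists C, 3%N => t t3 x y on_P.
have t0 : (0 < t)%N by apply: leq_trans t3.
have t1 : (1 : R) <= t%:R by rewrite ler1n.
have Hge := Ht_ge R t0.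
have H0 : 0 < (Ht t)%:R :> R.
  have lnt0 : 0 <= ln (t%:R : R) by rewrite ln_ge0.
  have : 0 < (Ht t)%:R * (4 * (ln 2 + ln t%:R)) :> R.
    by apply: lt_le_trans Hge; rewrite mulr_gt0 // exprn_gt0 // ltr0n.
  by rewrite pmulr_lgt0 // mulr_gt0 // ltr_wpDr.
apply: le_trans (on_grid_parabola_deviation t0 H0 on_P) _.
apply: growth => //.
- by rewrite ler_ln ?posrE ?ltr0n // ler_nat.
- exact: ln_sqr_le.
- exact: edge_error_ge0.
- exact: edge_error_le.
Qed.
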